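(* Let $(\mathcal Z,\mathcal W,\phi)$ be a state-flux triple, $\mathcal L$ an L-function on $\mathcal Z$ and $\mathcal V$ a quasipotential corresponding to $\mathcal L$. Then: (i) for any $\rho\in\mathrm{Dom}_{\mathrm{symdiss}}(F)$, $j\in T_\rho\mathcal W$ and $\lambda\in[0,1]$, $$\mathcal L(\rho,j)=\mathcal L_{(1-2\lambda)F}(\rho,j)+\mathcal R^\lambda_F(\rho)-2\lambda\langle F(\rho),j\rangle,\quad\text{with }\mathcal R^\lambda_F(\rho)\ge0;$$ (ii) for any $\rho\in\mathrm{Dom}(F^{\mathrm{asym}})$, $j\in T_\rho\mathcal W$ and $\lambda\in[0,1]$, $$\mathcal L(\rho,j)=\mathcal L_{F-2\lambda F^{\mathrm{sym}}}(\rho,j)+\mathcal R^\lambda_{F^{\mathrm{sym}}}(\rho)-2\lambda\langle F^{\mathrm{sym}}(\rho),j\rangle,\quad\text{with }\mathcal R^\lambda_{F^{\mathrm{sym}}}(\rho)\ge0;$$ (iii) for any $\rho\in\mathrm{Dom}_{\mathrm{symdiss}}(F^{\mathrm{asym}})$, $j\in T_\rho\mathcal W$ and $\lambda\in[0,1]$, $$\mathcal L(\rho,j)=\mathcal L_{F-2\lambda F^{\mathrm{asym}}}(\rho,j)+\mathcal R^\lambda_{F^{\mathrm{asym}}}(\rho)-2\lambda\langle F^{\mathrm{asym}}(\rho),j\rangle,\quad\text{with }\mathcal R^\lambda_{F^{\mathrm{asym}}}(\rho)\ge0.$$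
   Context: A state-flux triple $(\mathcal Z,\mathcal W,\phi)$ consists of differentiable Banach manifolds $\mathcal Z$, $\mathcal W$ and a surjective differentiable map $\phi:\mathcal W\to\mathcal Z$ such that: $T_w\mathcal W$ depends on $w$ only through $\rho=\phi[w]$ (written $T_\rho\mathcal W$); the differential of $\phi$ is a bounded linear map depending only on $\rho$, written $d\phi_\rho:T_\rho\mathcal W\to T_\rho\mathcal Z$; $T_\rho\mathcal W$, $T_\rho\mathcal Z$ have Banach preduals $T^*_\rho\mathcal W$, $T^*_\rho\mathcal Z$ with pairings $\langle\cdot,\cdot\rangle$; $d\phi_\rho^{\mathsf T}:T^*_\rho\mathcal Z\to T^*_\rho\mathcal W$ is the adjoint. An L-function on $\mathcal Z$ is $\mathcal L:\{(\rho,j):\rho\in\mathcal Z,j\in T_\rho\mathcal W\}\to\mathbb R\cup\{\infty\}$ such that for each $\rho$, $\inf\mathcal L(\rho,\cdot)=0$, there is a unique $j^0(\rho)$ with $\mathcal L(\rho,j^0(\rho))=0$, and $\mathcal L(\rho,\cdot)$ is convex and lower semicontinuous; its convex dual is $\mathcal H(\rho,\zeta)=\sup_j\{\langle\zeta,j\rangle-\mathcal L(\rho,j)\}$, $\zeta\in T^*_\rho\mathcal W$. A quasipotential is $\mathcal V:\mathcal Z\to\mathbb R\cup\{\infty\}$ with $\inf\mathcal V=0$ and $\mathcal H(\rho,d\phi_\rho^{\mathsf T}d\mathcal V(\rho))=0$ wherever the Gateaux derivative $d\mathcal V(\rho)$ exists. $\mathrm{Dom}(F)$: set of $\rho$ where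 $j\mapsto\mathcal L(\rho,j)$ is Gateaux differentiable at $0$; driving force $F(\rho):=-d\mathcal L(\rho,0)$. $\mathrm{Dom}_{\mathrm{symdiss}}(F):=\{\rho\in\mathrm{Dom}(F):\mathcal H(\rho,\zeta-F(\rho))=\mathcal H(\rho,-\zeta-F(\rho))\ \forall\zeta\in T^*_\rho\mathcal W\}$. $\mathrm{Dom}(F^{\mathrm{sym}})$: set where $\mathcal V$ is Gateaux differentiable, $F^{\mathrm{sym}}(\rho):=-\frac12d\phi_\rho^{\mathsf T}d\mathcal V(\rho)$; $\mathrm{Dom}(F^{\mathrm{asym}}):=\mathrm{Dom}(F)\cap\mathrm{Dom}(F^{\mathrm{sym}})$, $F^{\mathrm{asym}}(\rho):=F(\rho)+\frac12d\phi_\rho^{\mathsf T}d\mathcal V(\rho)$; $\mathrm{Dom}_{\mathrm{symdiss}}(F^{\mathrm{asym}}):=\mathrm{Dom}(F^{\mathrm{asym}})\cap\mathrm{Dom}_{\mathrm{symdiss}}(F)$. Tilting: for a covector field $G$ ($G(\rho)\in T^*_\rho\mathcal W$) and $\rho$ in $\mathrm{Dom}(F)$ and the domain of $G$, $\mathcal H_G(\rho,\zeta):=\mathcal H(\rho,\zeta+G(\rho)-F(\rho))-\mathcal H(\rho,G(\rho)-F(\rho))$ and $\mathcal L_G(\rho,j):=\sup_\zeta\{\langle\zeta,j\rangle-\mathcal H_G(\rho,\zeta)\}$. Generalised Fisher information: $\mathcal R^\lambda_G(\rho):=-\mathcal H(\rho,-2\lambda G(\rho))$.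
   Formalization: Lower semicontinuity of $\mathcal L(\rho,\cdot)$ in the definition of an L-function is taken for the weak* topology on $T_\rho\mathcal W$ induced by the predual $T^*_\rho\mathcal W$, not for the norm topology. The statement above fails without it. *)

From HB Require Import structures.
From mathcomp Require Import all_boot all_order all_algebra.
From mathcomp Require Import all_classical all_reals all_analysis.
Set Implicit Arguments. Unset Strict Implicit. Unset Printing Implicit Defensive.
Import Order.TTheory GRing.Theory Num.Theory.
Import numFieldNormedType.Exports.
Local Open Scope classical_set_scope.
Local Open Scope ring_scope.

Definition is_predual (R : realType) (X : normedModType R)
  (Y : completeNormedModType R) (p : Y -> X -> R) : Prop :=
  [/\ (forall y (a : R) (u v : X), p y (a *: u + v) = a * p y u + p y v),
      (forall x (a : R) (u v : Y), p (a *: u + v) x = a * p u x + p v x),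
      (forall y x, `|p y x| <= `|y| * `|x|),
      (forall x (e : R), 0 < e -> exists y : Y, `|y| <= 1 /\ `|x| - e < `|p y x|)
    & (forall f : Y -> R, (forall (a : R) (u v : Y), f (a *: u + v) = a * f u + f v) ->
         continuous f -> exists x : X, forall y, f y = p y x)].

Record state_flux (R : realType) := StateFlux {
  sfZ : Type;
  sfW : Type;
  sfphi : sfW -> sfZ;
  sfphi_surj : forall z : sfZ, exists w, sfphi w = z;
  (* T_rho W (depends on w only through rho = phi w) and T_rho Z *)
  TW : sfZ -> normedModType R;
  TZ : sfZ -> normedModType R;
  TWs : sfZ -> completeNormedModType R;
  TZs : sfZ -> completeNormedModType R;
  pairW : forall rho, TWs rho -> TW rho -> R;
  pairZ : forall rho, TZs rho -> TZ rho -> R;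
  pairW_predual : forall rho, is_predual (@pairW rho);
  pairZ_predual : forall rho, is_predual (@pairZ rho);
  dphi : forall rho, TW rho -> TZ rho;
  dphi_linear : forall rho (a : R) (u v : TW rho),
      dphi (a *: u + v) = a *: dphi u + dphi v;
  dphi_cont : forall rho, continuous (@dphi rho);
  dphiT : forall rho, TZs rho -> TWs rho;
  dphiT_adj : forall rho (z : TZs rho) (j : TW rho),
      pairW (dphiT z) j = pairZ z (dphi j);
  (* a chart of Z centred at rho (used to define Gateaux derivatives on Z) *)
  chartZ : forall rho, TZ rho -> sfZ;
  chartZ0 : forall rho, @chartZ rho 0 = rho
}.

Arguments TW {R} s rho.
Arguments TZ {R} s rho.
Arguments TWs {R} s rho.
Arguments TZs {R} s rho.
Arguments chartZ {R s rho}.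
Arguments pairW {R s rho}.
Arguments pairZ {R s rho}.
Arguments dphiT {R s rho}.

Section Defs.
Context {R : realType} {S : state_flux R}.
Local Open Scope ereal_scope.

Definition econvex (X : lmodType R) (f : X -> \bar R) : Prop :=
  forall (x y : X) (t : R), (0 <= t <= 1)%R ->
    f (t *: x + (1 - t) *: y)%R <= t%:E * f x + (1 - t)%:E * f y.

(* lower semicontinuity for the weak topology sigma(T_rho W, T^*_rho W)
   induced by the predual pairing (basic neighbourhoods: finitely many
   functionals from the predual and a radius e). *)
Definition weak_lsc (rho : sfZ S) (f : TW S rho -> \bar R) : Prop :=
  forall (x : TW S rho) (a : \bar R), a < f x ->
    exists (ys : seq (TWs S rho)) (e : R), (0 < e)%R /\
      forall x' : TW S rho,
        (forall y, y \in ys -> `|pairW y (x' - x)| < e)%R -> a < f x'.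

Definition is_Lfunction (L : forall rho : sfZ S, TW S rho -> \bar R) : Prop :=
  forall rho : sfZ S,
  [/\ (forall j, L rho j != -oo),
      ereal_inf (range (L rho)) = 0,
      (exists! j0, L rho j0 = 0),
      econvex (L rho)
    & weak_lsc (L rho)].

Definition Hdual (L : forall rho : sfZ S, TW S rho -> \bar R)
  (rho : sfZ S) (zeta : TWs S rho) : \bar R :=
  ereal_sup [set (pairW zeta j)%:E - L rho j | j in [set: TW S rho]].

Definition gateaux (X : normedModType R) (Y : completeNormedModType R)
  (p : Y -> X -> R) (f : X -> \bar R) (x : X) (xi : Y) : Prop :=
  f x \is a fin_num /\
  forall v : X,
    (\forall t \near (0%R : R)^', f (x + t *: v)%R \is a fin_num) /\
    ((fun t : R => ((fine (f (x + t *: v)%R) - fine (f x)) / t)%R) @ (0%R : R)^'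
       --> p xi v).

(* rho in Dom(F) with -F(rho) = eta, i.e. d L(rho,.)(0) = eta *)
Definition dL0 (L : forall rho : sfZ S, TW S rho -> \bar R)
  (rho : sfZ S) (eta : TWs S rho) : Prop :=
  gateaux (@pairW R S rho) (L rho) 0%R eta.

Definition dV (V : sfZ S -> \bar R) (rho : sfZ S) (xi : TZs S rho) : Prop :=
  gateaux (@pairZ R S rho) (fun v => V (chartZ v)) 0%R xi.

Definition is_quasipotential (L : forall rho : sfZ S, TW S rho -> \bar R)
  (V : sfZ S -> \bar R) : Prop :=
  (forall rho, V rho != -oo) /\
  ereal_inf (range V) = 0 /\
  forall rho (xi : TZs S rho), dV V xi -> Hdual L (dphiT xi) = 0.

Definition symdiss (L : forall rho : sfZ S, TW S rho -> \bar R)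
  (rho : sfZ S) (F0 : TWs S rho) : Prop :=
  forall zeta : TWs S rho, Hdual L (zeta - F0)%R = Hdual L (- zeta - F0)%R.

(* ---------- tilting (F0 = F(rho), G0 = G(rho)) ---------- *)
Definition Htilt (L : forall rho : sfZ S, TW S rho -> \bar R)
  (rho : sfZ S) (F0 G0 : TWs S rho) (zeta : TWs S rho) : \bar R :=
  Hdual L (zeta + G0 - F0)%R - Hdual L (G0 - F0)%R.

Definition Ltilt (L : forall rho : sfZ S, TW S rho -> \bar R)
  (rho : sfZ S) (F0 G0 : TWs S rho) (j : TW S rho) : \bar R :=
  ereal_sup [set (pairW zeta j)%:E - Htilt L F0 G0 zeta | zeta in [set: TWs S rho]].

Definition Fisher (L : forall rho : sfZ S, TW S rho -> \bar R)
  (rho : sfZ S) (lam : R) (G0 : TWs S rho) : \bar R :=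
  - Hdual L (- ((2 * lam) *: G0))%R.

End Defs.

From Pilot Require Import Defs.
From HB Require Import structures.
From mathcomp Require Import all_boot all_order all_algebra.
From mathcomp Require Import all_classical all_reals all_analysis.
From mathcomp Require Import ring lra.
Set Implicit Arguments. Unset Strict Implicit. Unset Printing Implicit Defensive.
Import Order.TTheory GRing.Theory Num.Theory.
Import numFieldNormedType.Exports.
Local Open Scope classical_set_scope.
Local Open Scope ring_scope.

(* The core is the Fenchel-Moreau identity L = L** for the nonnegative, convex,
   weakly lower semicontinuous function L(rho, .).  If a < L(rho, x), weak lower
   semicontinuity gives functionals y_1, ..., y_n and e > 0 such that L > a wherever
   |<y_i, x' - x>| < e for all i.  Pushing L forward along T = (<y_i, .>)_i with the
   penalty (|a| / e) |T x' - u| yields a real convex function K on R^n with K(T x) >= a.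
   A subgradient c of K at T x (a linear minorant of the directional derivative,
   obtained by a finite-dimensional Hahn-Banach argument) gives z = sum_i c_i y_i with
   H(rho, z) <= <z, x> - a, hence L**(rho, x) >= a.

   With L = L**, the substitution zeta -> zeta + D shows that tilting by G with
   D := G - F gives L_G(rho, j) = L(rho, j) - <D, j> + H(rho, D).  For D = -2 lam E this
   is the claimed decomposition, with Fisher term -H(rho, D), as soon as H(rho, -2E) <= 0:
   since L >= 0, that bound scales down to H(rho, -2 lam E) <= 0.  The three cases only
   differ in why H(rho, -2E) <= 0 for E = F, F^sym, F^asym: symmetry of H(rho, . - F)
   turns H(rho, -2F) into H(rho, 0) <= 0, and the quasipotential gives
   H(rho, dphi^T dV) = 0, directly for F^sym and after the same symmetry for F^asym. *)

Section Sublinear.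
Variables (R : realType) (V : lmodType R).

Definition pos_homogeneous (q : V -> R) : Prop :=
  forall (t : R) x, 0 <= t -> q (t *: x) = t * q x.

Definition sublinear (q : V -> R) : Prop :=
  (forall x y, q (x + y) <= q x + q y) /\ pos_homogeneous q.

Lemma pos_homogeneousP (q : V -> R) : q 0 = 0 ->
  (forall (t : R) x, 0 < t -> t * q x <= q (t *: x)) -> pos_homogeneous q.
Proof.
move=> q0 hle t x; rewrite le_eqVlt => /orP[/eqP <-|t0].
  by rewrite scale0r mul0r.
have ti : 0 < t^-1 by rewrite invr_gt0.
apply/eqP; rewrite eq_le hle // andbT -(ler_pM2l ti) mulKf ?gt_eqF //.
by rewrite -[X in _ <= q X](scalerK (lt0r_neq0 t0)) hle.
Qed.

Lemma sublinear0 q : sublinear q -> q 0 = 0.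
Proof. by move=> [_ hq]; rewrite -(scale0r 0) hq // mul0r. Qed.

Lemma sublinear_addN_ge0 q x : sublinear q -> 0 <= q x + q (- x).
Proof. by move=> hq; rewrite -(sublinear0 hq) -(subrr x); apply: hq.1. Qed.

Lemma sublinear_sum q (I : Type) (r : seq I) (f : I -> V) : sublinear q ->
  q (\sum_(i <- r) f i) <= \sum_(i <- r) q (f i).
Proof.
move=> hq; elim: r => [|i r IH]; first by rewrite !big_nil (sublinear0 hq).
by rewrite !big_cons (le_trans (hq.1 _ _)) // lerD2l.
Qed.

Section LinearizeAlong.
Variables (p : V -> R) (v : V).
Hypothesis hp : sublinear p.

Definition linearize_along x :=
  inf [set p (x + t *: v) - t * p v | t in [set t : R | 0 <= t]].
Local Notation q := linearize_along.

Let q_le x t : 0 <= t -> q x <= p (x + t *: v) - t * p v.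
Proof.
move=> t0; apply: ge_inf; last by exists t.
exists (- p (- x)) => _ [s s0 <-].
have := hp.1 (x + s *: v) (- x); rewrite addrAC subrr add0r hp.2 //; lra.
Qed.

Let q_ge x c : (forall t, 0 <= t -> c <= p (x + t *: v) - t * p v) -> c <= q x.
Proof.
move=> h; apply: lb_le_inf; first by exists (p (x + 0 *: v) - 0 * p v); exists 0 => /=.
by move=> _ [t t0 <-]; exact: h.
Qed.

Lemma linearize_along_le x : q x <= p x.
Proof. by have := q_le x (lexx 0); rewrite scale0r addr0 mul0r subr0. Qed.

Let q0 : q 0 = 0.
Proof.
apply/eqP; rewrite eq_le; apply/andP; split.
  by rewrite -[leRHS](sublinear0 hp) linearize_along_le.
by apply: q_ge => t t0; rewrite add0r hp.2 // subrr.
Qed.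

Lemma linearize_along_sublinear : sublinear q.
Proof.
split=> [x y|].
  suff : q (x + y) - q y <= q x by lra.
  apply: q_ge => s s0; suff : q (x + y) - (p (x + s *: v) - s * p v) <= q y by lra.
  apply: q_ge => t t0; have := q_le (x + y) (addr_ge0 s0 t0).
  rewrite scalerDl addrACA; have := hp.1 (x + s *: v) (y + t *: v); lra.
apply: pos_homogeneousP => // t x t0; apply: q_ge => s s0.
have -> : t *: x + s *: v = t *: (x + (s / t) *: v).
  by rewrite scalerDr scalerA mulrCA mulfV ?gt_eqF // mulr1.
have -> : s * p v = t * (s / t * p v) by field; rewrite gt_eqF.
by rewrite hp.2 ?(ltW t0) // -mulrBr ler_pM2l // q_le // divr_ge0 // ltW.
Qed.

Lemma linearize_along_addN : q v + q (- v) = 0.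
Proof.
have := sublinear_addN_ge0 v linearize_along_sublinear.
have := q_le (- v) ler01; rewrite scale1r addNr (sublinear0 hp) mul1r.
have := linearize_along_le v; lra.
Qed.

End LinearizeAlong.

Lemma sublinear_linearize (p : V -> R) (vs : seq V) : sublinear p ->
  exists2 q : V -> R, sublinear q /\ (forall x, q x <= p x) &
    forall v, v \in vs -> q v + q (- v) = 0.
Proof.
elim: vs p => [|v vs IH] p hp; first by exists p.
have [q [hq qp] qvs] := IH p hp.
exists (linearize_along q v).
  split; first exact: linearize_along_sublinear.
  by move=> x; exact: le_trans (linearize_along_le v hq x) (qp x).
move=> w; rewrite in_cons => /orP[/eqP ->|wvs]; first exact: linearize_along_addN.
have := sublinear_addN_ge0 w (linearize_along_sublinear v hq).
have := qvs w wvs; have := linearize_along_le v hq w.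
have := linearize_along_le v hq (- w); lra.
Qed.

End Sublinear.

Lemma sublinear_row_minorant (R : realType) n (p : 'rV[R]_n -> R) : sublinear p ->
  exists c : 'I_n -> R, forall u : 'rV[R]_n, \sum_i u 0 i * c i <= p u.
Proof.
move=> hp; have [q [hq qp] qlin] := sublinear_linearize [seq delta_mx 0 i | i <- enum 'I_n] hp.
exists (fun i => q (delta_mx 0 i)) => u; apply: le_trans (qp u).
have qZ i a : q (a *: delta_mx 0 i) = a * q (delta_mx 0 i).
  have [a0|a0] := leP 0 a; first by rewrite hq.2.
  have qN : q (- delta_mx 0 i) = - q (delta_mx 0 i).
    by apply/eqP; rewrite -addr_eq0 addrC qlin ?map_f ?mem_enum.
  rewrite -[a *: _]opprK -scalerN -scaleNr hq.2 ?oppr_ge0 ?(ltW a0) //.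
  by rewrite qN mulrNN.
have := sublinear_sum (index_enum 'I_n) (fun i => (- u) 0 i *: delta_mx 0 i) hq.
rewrite -row_sum_delta; under eq_bigr do rewrite qZ mxE mulNr.
rewrite sumrN; have := sublinear_addN_ge0 u hq; lra.
Qed.

Definition convex_fun (R : realType) (V : lmodType R) (K : V -> R) : Prop :=
  forall x y (t : R), 0 <= t <= 1 ->
    K (t *: x + (1 - t) *: y) <= t * K x + (1 - t) * K y.

Section DirectionalDerivative.
Variables (R : realType) (V : lmodType R) (K : V -> R) (u0 : V).
Hypothesis cK : convex_fun K.

Lemma convex_fun_wmean x y (s t : R) : 0 < s -> 0 < t ->
  (s + t) * K ((s + t)^-1 *: (s *: x + t *: y)) <= s * K x + t * K y.
Proof.
move=> s0 t0; have st0 : 0 < s + t by rewrite addr_gt0.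
have w01 : 0 <= s / (s + t) <= 1.
  by rewrite divr_ge0 ?(ltW s0) ?(ltW st0) //= ler_pdivrMr // mul1r lerDl (ltW t0).
have wC : 1 - s / (s + t) = t / (s + t) by field; rewrite gt_eqF.
rewrite -ler_pdivlMl // mulrDr ![_^-1 * (_ * _)]mulrA ![_^-1 * _]mulrC.
by rewrite scalerDr !scalerA ![_^-1 * _]mulrC -wC cK.
Qed.

Definition dir_deriv v :=
  inf [set (K (u0 + t *: v) - K u0) / t | t in [set t : R | 0 < t]].
Local Notation P := dir_deriv.

Let slope_lbound v t : 0 < t -> K u0 - K (u0 - v) <= (K (u0 + t *: v) - K u0) / t.
Proof.
move=> t0; rewrite ler_pdivlMr //.
have := convex_fun_wmean (u0 + t *: v) (u0 - v) ltr01 t0.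
rewrite scale1r scalerBr addrACA subrr addr0 -{1}(scale1r u0) -scalerDl.
by rewrite scalerA mulVf ?gt_eqF ?addr_gt0 // scale1r; nra.
Qed.

Let P_le v t : 0 < t -> P v <= (K (u0 + t *: v) - K u0) / t.
Proof.
move=> t0; apply: ge_inf; last by exists t.
by exists (K u0 - K (u0 - v)) => _ [s s0 <-]; exact: slope_lbound.
Qed.

Let P_ge v c : (forall t, 0 < t -> c <= (K (u0 + t *: v) - K u0) / t) -> c <= P v.
Proof.
move=> h; apply: lb_le_inf.
  by exists ((K (u0 + 1 *: v) - K u0) / 1); exists 1; rewrite /= ?ltr01.
by move=> _ [t t0 <-]; exact: h.
Qed.

Lemma dir_deriv_le v : P v <= K (u0 + v) - K u0.
Proof. by have := P_le v ltr01; rewrite scale1r divr1. Qed.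

Lemma dir_deriv_sublinear : sublinear P.
Proof.
have P0 : P 0 = 0.
  apply/eqP; rewrite eq_le; apply/andP; split.
    by have := P_le 0 ltr01; rewrite scaler0 addr0 subrr mul0r.
  by apply: P_ge => t _; rewrite scaler0 addr0 subrr mul0r.
split=> [v w|].
  suff : P (v + w) - P w <= P v by lra.
  apply: P_ge => s s0; suff : P (v + w) - (K (u0 + s *: v) - K u0) / s <= P w by lra.
  apply: P_ge => t t0; pose r := (t + s)^-1 * (t * s).
  have ts0 : 0 < t + s by rewrite addr_gt0.
  have r0 : 0 < r by rewrite mulr_gt0 ?invr_gt0 ?mulr_gt0.
  have := convex_fun_wmean (u0 + s *: v) (u0 + t *: w) t0 s0.
  have -> : (t + s)^-1 *: (t *: (u0 + s *: v) + s *: (u0 + t *: w)) = u0 + r *: (v + w).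
    rewrite !scalerDr !scalerA [s * t]mulrC addrACA -scalerDl -scalerDr.
    by rewrite -mulrDr mulVf ?gt_eqF // scale1r.
  set Kr := K (u0 + r *: (v + w)); set Ks := K (u0 + s *: v); set Kt := K (u0 + t *: w).
  move=> hKr; rewrite lerBlDr; apply: le_trans (P_le (v + w) r0) _.
  have -> : (Kr - K u0) / r = ((t + s) * Kr - (t + s) * K u0) / (t * s).
    by rewrite /r; field; rewrite !gt_eqF.
  have -> : (Kt - K u0) / t + (Ks - K u0) / s = (t * Ks + s * Kt - (t + s) * K u0) / (t * s).
    by field; rewrite !gt_eqF.
  by rewrite ler_pM2r ?invr_gt0 ?mulr_gt0 // lerD2r.
apply: pos_homogeneousP => // l v l0; apply: P_ge => t t0.
rewrite -ler_pdivlMl // mulrC -mulrA -invfM scalerA.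
by apply: P_le; rewrite mulr_gt0.
Qed.

End DirectionalDerivative.

Lemma convex_row_subgradient (R : realType) n (K : 'rV[R]_n -> R) (u0 : 'rV[R]_n) :
  convex_fun K -> exists c : 'I_n -> R,
    forall v : 'rV[R]_n, \sum_i v 0 i * c i <= K (u0 + v) - K u0.
Proof.
move=> cK; have [c hc] := sublinear_row_minorant (dir_deriv_sublinear u0 cK).
by exists c => v; exact: le_trans (hc v) (dir_deriv_le u0 cK v).
Qed.

Lemma lb_le_scale_inf (R : realType) (B : set R) c s : B !=set0 -> has_lbound B ->
  0 <= s -> (forall b, B b -> c <= s * b) -> c <= s * inf B.
Proof.
move=> Bn Bl; rewrite le_eqVlt => /orP[/eqP <- h|s0 h].
  by have [b Bb] := Bn; rewrite mul0r -(mul0r b) h.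
by rewrite -ler_pdivrMl //; apply: lb_le_inf => // b Bb; rewrite ler_pdivrMl // h.
Qed.

Lemma lb_le_wsum_inf (R : realType) (A B : set R) c t s :
  A !=set0 -> has_lbound A -> B !=set0 -> has_lbound B -> 0 <= t -> 0 <= s ->
  (forall a b, A a -> B b -> c <= t * a + s * b) -> c <= t * inf A + s * inf B.
Proof.
move=> An Al Bn Bl t0 s0 h; rewrite -lerBlDr; apply: lb_le_scale_inf => // b Bb.
by rewrite lerBlDr addrC -lerBlDr; apply: lb_le_scale_inf => // a Aa; rewrite lerBlDr addrC h.
Qed.

Lemma lee_of_EFin_lt (R : realType) (x y : \bar R) :
  (forall a : R, (a%:E < x)%E -> (a%:E <= y)%E) -> (x <= y)%E.
Proof.
case: x => [l| |] h; last 2 first.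
- by rewrite leye_eq; apply/eqP/eq_infty => r; apply: h; rewrite ltry.
- exact: leNye.
case: y h => [s| |] h; last 2 first.
- exact: leey.
- by have := h (l - 1); rewrite lte_fin leeNy_eq gtrBl ltr01 => /(_ isT).
rewrite lee_fin; apply/ler_addgt0Pr => e e0.
by rewrite -lerBlDr -lee_fin h // lte_fin gtrBl.
Qed.

Lemma ler_mx_norm_coord (R : realType) m n (u : 'M[R]_(m, n)) i j : `|u i j| <= `|u|.
Proof.
rewrite [X in _ <= X]/Num.norm /= mx_normrE.
exact: (le_bigmax _ (fun ij : 'I_m * 'I_n => `|u ij.1 ij.2|) (i, j)).
Qed.

Section Conjugate.
Variables (R : realType) (X Y : lmodType R) (p : Y -> X -> R).
Hypothesis p_linr : forall y (a : R) (u v : X), p y (a *: u + v) = a * p y u + p y v.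
Hypothesis p_linl : forall x (a : R) (u v : Y), p (a *: u + v) x = a * p u x + p v x.

Lemma pair0r y : p y 0 = 0.
Proof. by have := p_linr y 1 0 0; rewrite scale1r addr0 mul1r; lra. Qed.

Lemma pairZr y a u : p y (a *: u) = a * p y u.
Proof. by rewrite -[a *: u]addr0 p_linr pair0r addr0. Qed.

Lemma pairBr y u v : p y (u - v) = p y u - p y v.
Proof. by rewrite addrC -scaleN1r p_linr mulN1r addrC. Qed.

Lemma pair0l x : p 0 x = 0.
Proof. by have := p_linl x 1 0 0; rewrite scale1r addr0 mul1r; lra. Qed.

Lemma pairZl x a u : p (a *: u) x = a * p u x.
Proof. by rewrite -[a *: u]addr0 p_linl pair0l addr0. Qed.

Lemma pairDl x u v : p (u + v) x = p u x + p v x.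
Proof. by have := p_linl x 1 u v; rewrite scale1r mul1r. Qed.

Lemma pair_suml x (I : Type) (r : seq I) (F : I -> Y) :
  p (\sum_(i <- r) F i) x = \sum_(i <- r) p (F i) x.
Proof.
by elim: r => [|i r IH]; rewrite ?big_nil ?pair0l // !big_cons pairDl IH.
Qed.

Local Open Scope ereal_scope.

Definition fconj (f : X -> \bar R) (y : Y) : \bar R :=
  ereal_sup [set (p y x)%:E - f x | x in [set: X]].

Definition fbiconj (f : X -> \bar R) (x : X) : \bar R :=
  ereal_sup [set (p y x)%:E - fconj f y | y in [set: Y]].

Definition pairing_lsc (f : X -> \bar R) : Prop :=
  forall (x : X) (a : \bar R), a < f x ->
    exists (ys : seq Y) (e : R), (0 < e)%R /\
      forall x', (forall y, y \in ys -> `|p y (x' - x)| < e)%R -> a < f x'.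

Lemma fconj_ge f y x : (p y x)%:E - f x <= fconj f y.
Proof. by apply: ereal_sup_ubound; exists x. Qed.

Lemma fconj_le0P f y : fconj f y <= 0 <-> forall x, (p y x)%:E <= f x.
Proof.
split=> [h x|h].
  have := le_trans (fconj_ge f y x) h.
  by case: (f x) => [l| |] //=; rewrite ?leey // -EFinB lee_fin subr_le0.
apply: ge_ereal_sup => _ [x _ <-]; have := h x.
by case: (f x) => [l| |] //=; rewrite -?EFinB ?lee_fin ?subr_le0 // => _; rewrite leNye.
Qed.

Lemma fconj_neqNy f y x0 : f x0 \is a fin_num -> fconj f y != -oo.
Proof.
move=> fx0; apply: contraTneq (fconj_ge f y x0) => ->.
by rewrite leeNy_eq -(fineK fx0) -EFinB.
Qed.

Lemma fconj_le0_scale f y (lam : R) : (forall x, 0 <= f x) -> (0 <= lam <= 1)%R ->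
  fconj f y <= 0 -> fconj f (lam *: y) <= 0.
Proof.
move=> f_ge0 /andP[l0 l1] /fconj_le0P h; apply/fconj_le0P => x.
have := h x; have := f_ge0 x; rewrite pairZl.
case: (f x) => [l| |] //=; rewrite ?leey // !lee_fin => h1 h2; nra.
Qed.

Lemma fbiconj_translate f (D : Y) (h : R) x :
  ereal_sup [set (p z x)%:E - (fconj f (z + D) - h%:E) | z in [set: Y]] =
  fbiconj f x + (h - p D x)%:E.
Proof.
have E z : (p z x)%:E - (fconj f (z + D) - h%:E) =
           (p (z + D) x)%:E - fconj f (z + D) + (h - p D x)%:E.
  by rewrite pairDl; case: (fconj f (z + D)) => [r| |] //=; congr (_%:E); lra.
apply/le_anti/andP; split.
  apply: ge_ereal_sup => _ [z _ <-]; rewrite E leeD2r //.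
  by apply: ereal_sup_ubound; exists (z + D)%R.
rewrite -leeBrDr //; apply: ge_ereal_sup => _ [z _ <-]; rewrite leeBrDr //.
by apply: ereal_sup_ubound; exists (z - D)%R => //; rewrite E subrK.
Qed.

Section FenchelMoreau.
Variable f : X -> \bar R.
Hypotheses (f_ge0 : forall x, 0 <= f x) (f_convex : econvex f) (f_lsc : pairing_lsc f).
Hypothesis f_proper : exists x0, f x0 \is a fin_num.

Lemma fbiconj_le x : fbiconj f x <= f x.
Proof.
apply: ge_ereal_sup => _ [y _ <-]; have := fconj_ge f y x.
case: (f x) (f_ge0 x) => [l| |] // _ h; last exact: leey.
by have := leeB (lexx (p y x)%:E) h; rewrite -EFinB subKr.
Qed.

Section Separation.
Local Open Scope ring_scope.
Variables (x : X) (a : R) (ys : seq Y) (e : R).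
Hypothesis e0 : 0 < e.
Hypothesis a_lt_f : forall x', (forall y, y \in ys -> `|p y (x' - x)| < e) -> (a%:E < f x')%E.

Let n := size ys.
Let T (x' : X) : 'rV[R]_n := \row_(i < n) p (nth 0 ys i) x'.
Let M := `|a| / e.
Let B u := [set fine (f x') + M * `|T x' - u| | x' in [set x' | f x' \is a fin_num]].
Let K u := inf (B u).

Let M_ge0 : 0 <= M. Proof. by rewrite divr_ge0 // ltW. Qed.

Let B_nonempty u : B u !=set0.
Proof. by have [x0 fx0] := f_proper; exists (fine (f x0) + M * `|T x0 - u|), x0. Qed.

Let B_lbound u : has_lbound (B u).
Proof.
exists 0 => _ [x1 _ <-].
exact: addr_ge0 (fine_ge0 (f_ge0 x1)) (mulr_ge0 M_ge0 (normr_ge0 _)).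
Qed.

Let K_le x' : f x' \is a fin_num -> K (T x') <= fine (f x').
Proof.
by move=> fx'; apply: ge_inf => //; exists x' => //; rewrite subrr normr0 mulr0 addr0.
Qed.

Let K_convex : convex_fun K.
Proof.
move=> u w t /andP[t0 t1]; have t1' : 0 <= 1 - t by rewrite subr_ge0.
apply: lb_le_wsum_inf => // _ _ [x1 f1 <-] [x2 f2 <-].
set x' := t *: x1 + (1 - t) *: x2.
have hf : (f x' <= t%:E * f x1 + (1 - t)%:E * f x2)%E by apply: f_convex; rewrite t0.
have fx' : f x' \is a fin_num.
  rewrite ge0_fin_numE ?f_ge0 //; apply: le_lt_trans hf _.
  by rewrite -(fineK f1) -(fineK f2) -!EFinM -EFinD ltry.
have hfx : fine (f x') <= t * fine (f x1) + (1 - t) * fine (f x2).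
  by rewrite -lee_fin fineK // EFinD !EFinM !fineK.
have hN : `|T x' - (t *: u + (1 - t) *: w)| <= t * `|T x1 - u| + (1 - t) * `|T x2 - w|.
  have -> : T x' - (t *: u + (1 - t) *: w) = t *: (T x1 - u) + (1 - t) *: (T x2 - w).
    have -> : T x' = t *: T x1 + (1 - t) *: T x2.
      by apply/rowP => i; rewrite !mxE p_linr pairZr.
    by rewrite !scalerBr addrACA opprD.
  by rewrite (le_trans (ler_normD _ _)) // !normrZ !ger0_norm.
apply: le_trans (_ : fine (f x') + M * `|T x' - (t *: u + (1 - t) *: w)| <= _).
  by apply: ge_inf => //; exists x'.
have := ler_wpM2l M_ge0 hN; nra.
Qed.

Let a_le_K : a <= K (T x).
Proof.
apply: lb_le_inf => // _ [x' fx' <-].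
have fx'0 : 0 <= fine (f x') by rewrite fine_ge0 ?f_ge0.
have [[y yys hy]|far] := pselect (exists2 y, y \in ys & e <= `|p y (x' - x)|).
  have iy : (index y ys < n)%N by rewrite index_mem.
  have : e <= `|T x' - T x|.
    apply: le_trans hy (le_trans _ (ler_mx_norm_coord _ 0 (Ordinal iy))).
    by rewrite !mxE nth_index // pairBr.
  move=> /(ler_wpM2l M_ge0); rewrite /M divfK ?gt_eqF //.
  have := ler_norm a; lra.
have : (a%:E < f x')%E.
  by apply: a_lt_f => y yys; rewrite ltNge; apply/negP => hy; apply: far; exists y.
rewrite -(fineK fx') lte_fin; have := mulr_ge0 M_ge0 (normr_ge0 (T x' - T x)); lra.
Qed.

Lemma fconj_separating : exists z, (fconj f z <= (p z x - a)%:E)%E.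
Proof.
have [c hc] := convex_row_subgradient (T x) K_convex.
pose z := \sum_(i < n) c i *: nth 0 ys i.
have pz x' : p z x' = \sum_i T x' 0 i * c i.
  by rewrite pair_suml; apply: eq_bigr => i _; rewrite pairZl mxE mulrC.
exists z; apply: ge_ereal_sup => _ [x' _ <-].
have [fx'|] := boolP (f x' \is a fin_num); last first.
  by rewrite ge0_fin_numE ?f_ge0 // -leNgt leye_eq => /eqP ->; rewrite addeNy leNye.
rewrite -(fineK fx') -EFinB lee_fin.
have := hc (T x' - T x); rewrite [T x + _]addrC subrK.
have -> : \sum_i (T x' - T x) 0 i * c i = p z x' - p z x.
  by rewrite !pz -sumrB; apply: eq_bigr => i _; rewrite !mxE mulrBl.
have := K_le fx'; have := a_le_K; lra.
Qed.

End Separation.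

Lemma fbiconj_ge x (a : R) : a%:E < f x -> a%:E <= fbiconj f x.
Proof.
move=> ha; have [ys [e [e0 hsep]]] := f_lsc ha.
have [z hz] := fconj_separating e0 hsep.
apply: le_ereal_sup_tmp; exists ((p z x)%:E - fconj f z); first by exists z.
by have := leeB (lexx (p z x)%:E) hz; rewrite -EFinB subKr.
Qed.

Theorem fbiconj_id x : fbiconj f x = f x.
Proof.
apply/le_anti; rewrite fbiconj_le /=.
by apply: lee_of_EFin_lt => a; exact: fbiconj_ge.
Qed.

End FenchelMoreau.

End Conjugate.

Lemma pairW_linr (R : realType) (S : state_flux R) (rho : sfZ S) y (a : R) (u v : TW S rho) :
  pairW y (a *: u + v) = a * pairW y u + pairW y v.
Proof. by case: (pairW_predual rho) => h *; exact: h. Qed.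

Lemma pairW_linl (R : realType) (S : state_flux R) (rho : sfZ S) x (a : R) (u v : TWs S rho) :
  pairW (a *: u + v) x = a * pairW u x + pairW v x.
Proof. by case: (pairW_predual rho) => _ h *; exact: h. Qed.

Section Tilting.
(* Keeps [rho] an explicit argument of the section variable [L], as in Defs. *)
Local Unset Implicit Arguments.
Variables (R : realType) (S : state_flux R) (L : forall rho : sfZ S, TW S rho -> \bar R).
Hypothesis hL : is_Lfunction L.
Variable rho : sfZ S.
Local Open Scope ereal_scope.

Let pW_linr := @pairW_linr R S rho.
Let pW_linl := @pairW_linl R S rho.

Let L_ge0 j : 0 <= L rho j.
Proof.
have [_ inf0 _ _ _] := hL rho; rewrite -inf0; apply: ereal_inf_lbound; by exists j.
Qed.

Let L_proper : exists j0, L rho j0 \is a fin_num.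
Proof. by have [_ _ [j0 [j00 _]] _ _] := hL rho; exists j0; rewrite j00. Qed.

Let L_fbiconj j : fbiconj pairW (L rho) j = L rho j.
Proof.
have [_ _ _ L_convex L_lsc] := hL rho.
by apply: (fbiconj_id pW_linr pW_linl L_ge0 L_convex _ L_proper); exact: L_lsc.
Qed.

Lemma Hdual0_le0 : Hdual L (0%R : TWs S rho) <= 0.
Proof. by apply/fconj_le0P => j; rewrite (pair0l pW_linl). Qed.

Lemma Hdual_le0_fin_num (z : TWs S rho) : Hdual L z <= 0 -> Hdual L z \is a fin_num.
Proof.
have [j0 fj0] := L_proper.
by move=> hz; rewrite fin_numE (fconj_neqNy _ _ fj0); apply: contraTneq hz => ->.
Qed.

Lemma LtiltE (F0 G0 : TWs S rho) (j : TW S rho) : Hdual L (G0 - F0)%R \is a fin_num ->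
  Ltilt L F0 G0 j = L rho j + (fine (Hdual L (G0 - F0)%R) - pairW (G0 - F0) j)%:E.
Proof.
move=> fD; rewrite -L_fbiconj -(fbiconj_translate pW_linl) /Ltilt /Htilt fineK //.
by congr ereal_sup; apply: eq_imagel => z _; rewrite addrA.
Qed.

Lemma tilted_decomposition (F0 G0 G : TWs S rho) (lam : R) (j : TW S rho) :
  (0 <= lam <= 1)%R -> (G0 - F0 = - ((2 * lam) *: G))%R -> Hdual L (- (2 *: G))%R <= 0 ->
  L rho j = Ltilt L F0 G0 j + Fisher L lam G - ((2 * lam) * pairW G j)%:E
  /\ 0 <= Fisher L lam G.
Proof.
move=> hlam eD hG.
have hD : Hdual L (G0 - F0)%R <= 0.
  by rewrite eD mulrC -scalerA -scalerN; exact: fconj_le0_scale pW_linl _ _ _ _ hlam hG.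
split; last by rewrite /Fisher -eD oppe_ge0.
rewrite LtiltE ?Hdual_le0_fin_num // /Fisher -eD -(fineK (Hdual_le0_fin_num _ hD)) eD.
rewrite -scaleNr (pairZl pW_linl).
by case: (L rho j) => [l| |] //=; congr (_%:E); lra.
Qed.

End Tilting.

Theorem theorem2p27 (R : realType) (S : state_flux R)
  (L : forall rho : sfZ S, TW S rho -> \bar R) (V : sfZ S -> \bar R)
  (hL : is_Lfunction L) (hV : is_quasipotential L V) :
  (* (i) rho in Dom_symdiss(F), with F(rho) = - eta *)
  (forall (rho : sfZ S) (eta : TWs S rho),
     dL0 L eta -> symdiss L (- eta) ->
     forall (j : TW S rho) (lam : R), 0 <= lam <= 1 ->
       let F := - eta in
       L rho j = (Ltilt L F ((1 - 2 * lam) *: F)%R j + Fisher L lam F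
                  - ((2 * lam) * pairW F j)%:E)%E
       /\ (0 <= Fisher L lam F)%E) /\
  (* (ii) rho in Dom(F^asym) *)
  (forall (rho : sfZ S) (eta : TWs S rho) (xi : TZs S rho),
     dL0 L eta -> dV V xi ->
     forall (j : TW S rho) (lam : R), 0 <= lam <= 1 ->
       let F := - eta in
       let Fsym := - (2^-1 *: dphiT xi) in
       L rho j = (Ltilt L F (F - (2 * lam) *: Fsym)%R j + Fisher L lam Fsym
                  - ((2 * lam) * pairW Fsym j)%:E)%E
       /\ (0 <= Fisher L lam Fsym)%E) /\
  (* (iii) rho in Dom_symdiss(F^asym) *)
  (forall (rho : sfZ S) (eta : TWs S rho) (xi : TZs S rho),
     dL0 L eta -> dV V xi -> symdiss L (- eta) ->
     forall (j : TW S rho) (lam : R), 0 <= lam <= 1 ->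
       let F := - eta in
       let Fasym := F + 2^-1 *: dphiT xi in
       L rho j = (Ltilt L F (F - (2 * lam) *: Fasym)%R j + Fisher L lam Fasym
                  - ((2 * lam) * pairW Fasym j)%:E)%E
       /\ (0 <= Fisher L lam Fasym)%E).
Proof.
(* The decomposition holds for any covector F. *)
have [_ [_ H_dV]] := hV.
have twoK (G : TWs S _) : 2 *: (2^-1 *: G) = G.
  by rewrite scalerA mulfV ?scale1r // pnatr_eq0.
split; [|split].
- move=> rho eta _ hsym j lam hlam F; apply: tilted_decomposition => //.
    by rewrite scalerBl scale1r addrAC subrr add0r.
  have := hsym F; rewrite -/F subrr => hs0.
  by rewrite scaler_nat mulr2n opprD -hs0; exact: Hdual0_le0.
- move=> rho eta xi _ hxi j lam hlam F Fsym; apply: tilted_decomposition => //.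
    by rewrite addrAC subrr add0r.
  by rewrite scalerN opprK twoK (H_dV _ _ hxi).
- move=> rho eta xi _ hxi hsym j lam hlam F Fasym; apply: tilted_decomposition => //.
    by rewrite addrAC subrr add0r.
  have := hsym (F + dphiT xi); rewrite addrAC subrr add0r (H_dV _ _ hxi) => ->.
  by rewrite scalerDr twoK scaler_nat mulr2n opprD !opprD addrAC.
Qed.
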